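(* Let $k$ be a positive integer, $\mathbb{S}=\mathbb{R}/2\pi\mathbb{Z}$, and for $t\in\mathbb{S}$ let $$U_k(t)=\bigl(\cos t,\ \sin t,\ \cos 3t,\ \sin 3t,\ \ldots,\ \cos(2k-1)t,\ \sin(2k-1)t\bigr)\in\mathbb{R}^{2k}.$$ Let $t_1,\ldots,t_{2k}\in\mathbb{S}$ be distinct points no two of which are antipodal (i.e. $t_i\neq t_j+\pi \pmod{2\pi}$ for all $i,j$). Then the vectors $U_k(t_1),\ldots,U_k(t_{2k})$ are linearly independent. *)

From HB Require Import structures.
From mathcomp Require Import all_boot all_order all_algebra.
From mathcomp Require Import all_classical all_reals all_analysis.
Set Implicit Arguments. Unset Strict Implicit. Unset Printing Implicit Defensive.
Import Order.TTheory GRing.Theory Num.Theory.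
Local Open Scope ring_scope.

(* U_k(t) = (cos t, sin t, cos 3t, sin 3t, ..., cos (2k-1)t, sin (2k-1)t).
   Coordinate j (0-based): j = 2m -> cos((2m+1) t), j = 2m+1 -> sin((2m+1) t). *)
Definition Uk (R : realType) (k : nat) (t : R) : 'rV[R]_(k.*2) :=
  \row_(j < k.*2)
    (if odd j then sin (((j./2).*2.+1)%:R * t) else cos (((j./2).*2.+1)%:R * t)).

Definition Umat (R : realType) (k : nat) (t : 'I_(k.*2) -> R) : 'M[R]_(k.*2) :=
  \matrix_(i < k.*2) Uk k (t i).

Definition eq_mod2pi (R : realType) (x y : R) : Prop :=
  exists m : int, x - y = m%:~R * (2 * pi).

From HB Require Import structures.
From mathcomp Require Import all_boot all_order all_algebra.
From mathcomp Require Import all_classical all_reals all_analysis.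
From mathcomp Require Import zify ring lra.
Set Implicit Arguments. Unset Strict Implicit. Unset Printing Implicit Defensive.
Import Order.TTheory GRing.Theory Num.Theory.
(* Imported after Num.Theory, so that [Re] is the projection of [complex]. *)
From mathcomp Require Import complex.
Local Open Scope ring_scope.
Local Open Scope complex_scope.

(* Write z = e^{it} and pair each coordinate of U_k(t) with its conjugate frequency:
   for a coefficient vector v, 2 <v, U_k(t)> e^{i(2k-1)t} = Q_v(e^{2it}) for a polynomial
   Q_v of degree < 2k whose coefficients determine v.  If v annihilates every U_k(t_i),
   Q_v has the 2k roots e^{2it_i}, which are distinct because the t_i are pairwise
   distinct and non-antipodal; hence Q_v = 0 and v = 0. *)

Lemma periodicz (U : zmodType) (V : zmodType) (f : U -> V) (T : U) :
  periodic f T -> forall (m : int) a, f (a + T *~ m) = f a.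
Proof.
move=> fT [] n a; first exact: periodicn.
by rewrite NegzE mulrNz -[in RHS](subrK (T *+ n.+1) a) periodicn.
Qed.

Section ComplexExponential.
Variable R : realType.

Definition expi (t : R) : R[i] := cos t +i* sin t.

Lemma expi0 : expi 0 = 1.
Proof. by rewrite /expi cos0 sin0. Qed.

Lemma expiD a b : expi (a + b) = expi a * expi b.
Proof. by rewrite /expi cosD sinD; simpc; congr (_ +i* _); rewrite addrC. Qed.

Lemma expiX n t : expi t ^+ n = expi (n%:R * t).
Proof.
elim: n => [|n IH]; first by rewrite mul0r expi0.
by rewrite exprSr IH -expiD -addn1 natrD mulrDl mul1r.
Qed.

Lemma expiN t : expi (- t) = (expi t)^*%C.
Proof. by rewrite /expi cosN sinN. Qed.

Lemma expiDpi t : expi (t + pi) = - expi t.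
Proof. by rewrite /expi sinDpi cosDpi. Qed.

Lemma expi_mulJ t : expi t * (expi t)^*%C = 1.
Proof. by rewrite -expiN -expiD subrr expi0. Qed.

Lemma expi_periodic : periodic expi (2 * pi).
Proof. by move=> t; rewrite /expi mulr_natl cosD2pi sinD2pi. Qed.

Lemma expi_eq1_02pi r : 0 <= r < 2 * pi -> expi r = 1 -> r = 0.
Proof.
move=> /andP[r_ge0 r_lt2pi] [cos_r sin_r].
have pi_pos : 0 < pi :> R := pi_gt0 R.
have [r_lepi | pi_ltr] := lerP r pi.
  by apply: cos_inj; rewrite ?cos0 // !in_itv /= ?r_ge0 ?r_lepi ?lexx ?ltW.
have : 0 < sin (r - pi) by apply: sin_gt0_pi; rewrite subr_gt0 pi_ltr /=; lra.
by have := sinDpi (r - pi); rewrite subrK sin_r; lra.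
Qed.

Lemma expi_eq1 x : expi x = 1 -> eq_mod2pi x 0.
Proof.
move=> expi_x.
have two_pi_gt0 : 0 < 2 * pi :> R by rewrite mulr_gt0 ?pi_gt0.
have /andP[m_le m_gt] := floor_itv (x / (2 * pi)).
set m := Num.floor (x / (2 * pi)) in m_le m_gt *; exists m.
rewrite subr0; apply/eqP; rewrite -subr_eq0; apply/eqP; apply: expi_eq1_02pi.
  rewrite subr_ge0 -ler_pdivlMr // m_le /=.
  by move: m_gt; rewrite ltr_pdivrMr // intrD mulrDl mul1r; lra.
rewrite -expi_x -[in RHS](subrK (m%:~R * (2 * pi)) x) mulrzl.
by rewrite (periodicz expi_periodic).
Qed.

Lemma expi_inj a b : expi a = expi b -> eq_mod2pi a b.
Proof.
move=> eq_ab; have [m] : eq_mod2pi (a - b) 0.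
  by apply: expi_eq1; rewrite expiD expiN eq_ab expi_mulJ.
by rewrite subr0; exists m.
Qed.

Lemma expi_mulr2n_eq a b :
  expi (a *+ 2) = expi (b *+ 2) -> eq_mod2pi a b \/ eq_mod2pi a (b + pi).
Proof.
rewrite -[a *+ 2]mulr_natl -[b *+ 2]mulr_natl -!expiX => /eqP.
rewrite eqf_sqr -expiDpi.
by case/orP => /eqP /expi_inj; [left | right].
Qed.

End ComplexExponential.

Lemma addcJ (R : rcfType) (x : R[i]) : x + x^*%C = (Re x *+ 2)%:C.
Proof. by case: x => a b; simpc. Qed.

Lemma Re_realM (R : rcfType) (r : R) (z : R[i]) : Re (r%:C * z) = r * Re z.
Proof. by case: z => a b; simpc. Qed.

Lemma eqn_half_odd m n : (m./2 == n./2) && (odd m == odd n) = (m == n).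
Proof.
apply/andP/eqP => [[/eqP eq_half /eqP eq_odd] | -> //].
by rewrite -[m]odd_double_half -[n]odd_double_half eq_half eq_odd.
Qed.

Section OddHarmonicPolynomial.
Variables (R : realType) (k : nat).

Definition Uk_phase (j : nat) : R[i] := if odd j then - 'i else 1.

Lemma Uk_Re t (j : 'I_(k.*2)) :
  Uk k t 0 j = Re (Uk_phase j * expi (((j./2).*2.+1)%:R * t)).
Proof. by rewrite mxE /Uk_phase /expi; case: (odd j); simpc. Qed.

Lemma Re_phase i j : Re ((Uk_phase i)^*%C * Uk_phase j) = (odd i == odd j)%:R.
Proof. by rewrite /Uk_phase; case: (odd i); case: (odd j); simpc. Qed.

Definition Uk_poly (v : 'rV[R]_(k.*2)) : {poly R[i]} :=
  \sum_(j < k.*2) (v 0 j)%:C *: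
    (Uk_phase j *: 'X^(k + j./2) + (Uk_phase j)^*%C *: 'X^(k.-1 - j./2)).

Lemma size_Uk_poly v : (size (Uk_poly v) <= k.*2)%N.
Proof.
apply/leq_sizeP => d le_2k_d; rewrite coef_sum big1 // => j _.
have j_lt := ltn_ord j.
rewrite coefZ coefD !coefZ !coefXn.
have /negPf-> : (d != k + j./2)%N by apply/eqP; lia.
have /negPf-> : (d != k.-1 - j./2)%N by apply/eqP; lia.
by rewrite !mulr0 addr0 mulr0.
Qed.

Lemma coef_Uk_poly v m : (m < k)%N ->
  (Uk_poly v)`_(k + m) = \sum_(j < k.*2) (v 0 j)%:C * (Uk_phase j * (j./2 == m)%:R).
Proof.
move=> m_lt; rewrite coef_sum; apply: eq_bigr => j _.
rewrite coefZ coefD !coefZ !coefXn eqn_add2l eq_sym.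
have /negPf-> : (k + m != k.-1 - j./2)%N by apply/eqP; lia.
by rewrite mulr0 addr0.
Qed.

(* The coefficient of 'X^(k + m) is v_(2m) - i v_(2m+1), so v_j is its real part
   after multiplication by the conjugate phase of j. *)
Lemma Uk_poly_eq0 v : Uk_poly v = 0 -> v = 0.
Proof.
move=> Q0; apply/rowP => j0; rewrite mxE.
have half_j0_lt : (j0./2 < k)%N by have := ltn_ord j0; lia.
have Re_term (j : 'I_(k.*2)) :
    Re ((Uk_phase j0)^*%C * ((v 0 j)%:C * (Uk_phase j * (j./2 == j0./2)%:R))) =
    v 0 j * (j == j0)%:R.
  rewrite mulrCA Re_realM mulrA -(rmorph_nat (real_complex R)) [_ * _%:C]mulrC.
  by rewrite Re_realM Re_phase -natrM mulnb [odd j0 == _]eq_sym eqn_half_odd.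
have := congr1 (fun p : {poly R[i]} => Re ((Uk_phase j0)^*%C * p`_(k + j0./2))) Q0.
rewrite /= coef0 mulr0 coef_Uk_poly // mulr_sumr raddf_sum.
rewrite (eq_bigr _ (fun j _ => Re_term j)).
rewrite (bigD1 j0) //= eqxx mulr1 big1 ?addr0 // => j /negPf->.
by rewrite mulr0.
Qed.

Lemma horner_Uk_poly v t :
  (Uk_poly v).[expi (t *+ 2)] =
  expi t ^+ (k.*2.-1) * ((\sum_(j < k.*2) v 0 j * Uk k t 0 j) *+ 2)%:C.
Proof.
set E := expi t ^+ k.*2.-1.
have expi2X m : expi (t *+ 2) ^+ m = expi t ^+ (2 * m).
  by rewrite -mulr_natl -expiX exprM.
have term (j : 'I_(k.*2)) :
    ((v 0 j)%:C *: (Uk_phase j *: 'X^(k + j./2)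
       + (Uk_phase j)^*%C *: 'X^(k.-1 - j./2))).[expi (t *+ 2)] =
    E * ((v 0 j * Uk k t 0 j) *+ 2)%:C.
  have j_lt := ltn_ord j.
  set z := expi (((j./2).*2.+1)%:R * t).
  have z_pow : z = expi t ^+ (j./2).*2.+1 by rewrite expiX.
  have w_hi : expi (t *+ 2) ^+ (k + j./2) = E * z.
    by rewrite expi2X z_pow -exprD; congr (_ ^+ _); lia.
  have w_lo : expi (t *+ 2) ^+ (k.-1 - j./2) = E * z^*%C.
    rewrite -[LHS]mulr1 -[1](expi_mulJ (((j./2).*2.+1)%:R * t)) -/z mulrA.
    by rewrite expi2X z_pow -exprD; congr (_ ^+ _ * _); lia.
  rewrite hornerZ hornerD !hornerZ !hornerXn w_hi w_lo Uk_Re -/z.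
  rewrite -mulrnAr rmorphM /= -addcJ rmorphM /=.
  ring.
rewrite horner_sum (eq_bigr _ (fun j _ => term j)) -mulr_sumr.
by rewrite -rmorph_sum -sumrMnl.
Qed.

End OddHarmonicPolynomial.

Theorem lemma2p2 (R : realType) (k : nat) (t : 'I_(k.*2) -> R) :
  (0 < k)%N ->
  (forall i j : 'I_(k.*2), i != j -> ~ eq_mod2pi (t i) (t j)) ->
  (forall i j : 'I_(k.*2), ~ eq_mod2pi (t i) (t j + pi)) ->
  row_free (Umat t).
Proof.
move=> _ t_distinct t_not_antipodal.
rewrite row_free_unit unitmxE unitfE -det_tr.
apply/negP => /det0P[v v_neq0 vU0].
have Uk_poly_neq0 : Uk_poly v != 0 by apply: contra v_neq0 => /eqP/Uk_poly_eq0->.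
have v_orth_U i : \sum_(j < k.*2) v 0 j * Uk k (t i) 0 j = 0.
  have := congr1 (fun M : 'rV[R]_(k.*2) => M 0 i) vU0; rewrite !mxE => sum_eq0.
  by rewrite -[RHS]sum_eq0; apply: eq_bigr => j _; rewrite !mxE.
pose roots := [seq expi (t i *+ 2) | i : 'I_(k.*2)].
have roots_root : all (root (Uk_poly v)) roots.
  by apply/allP => _ /mapP[i _ ->]; rewrite /root horner_Uk_poly v_orth_U mul0rn mulr0.
have roots_uniq : uniq roots.
  rewrite map_inj_uniq ?enum_uniq // => i j /expi_mulr2n_eq[eq_ij | /t_not_antipodal//].
  by apply/eqP; apply: contraT => /t_distinct.
have := max_poly_roots Uk_poly_neq0 roots_root roots_uniq.
by rewrite size_map size_enum_ord ltnNge size_Uk_poly.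
Qed.
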